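(* Let $M>1$, $q>0$ and $n>-2$ be real parameters, and define the sets \[ \begin{aligned} A&=\{s\in\mathbb{R}: |s-(n-s)|\le q,\ 0\le s\le M,\ 0\le n-s\le M\},\\ B&=\{s\in\mathbb{R}: |s-(n+1-s)|\le q,\ 0\le s\le M,\ 0\le n+1-s\le M\},\\ C&=\{s\in\mathbb{R}: |s-(n-s)|\le q,\ 0\le s+1\le M,\ 0\le n+1-s\le M\}. \end{aligned} \] Then \[ \int_{A}\binom{M-1}{s}\binom{M-1}{n-s}ds\ \ge\ \int_{A}\binom{M}{s}\binom{M-2}{n-s}ds, \] \[ \int_{B}\binom{M-1}{s}\binom{M-1}{n-s}ds\ \le\ \int_{B}\binom{M}{s}\binom{M-2}{n-s}ds, \] \[ \int_{C}\binom{M-1}{s}\binom{M-1}{n-s}ds\ \ge\ \int_{C}\binom{M}{s+1}\binom{M-2}{n-s-1}ds. \]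
   Context: For real $a>-1$ and real $s$, the generalized binomial coefficient is $\binom{a}{s}=\Gamma(a+1)\cdot\frac{1}{\Gamma(s+1)}\cdot\frac{1}{\Gamma(a-s+1)}$, where $\Gamma$ is the Gamma function and $1/\Gamma$ is understood as the entire function (equal to $0$ at the poles of $\Gamma$, i.e. at non-positive integers). *)

From Stdlib Require Import Reals Lra Arith Factorial ClassicalEpsilon.
Open Scope R_scope.

Fixpoint poch (x : R) (k : nat) : R :=
  match k with
  | O => 1
  | S k' => poch x k' * (x + INR k')
  end.

(* Gauss/Euler limit: 1/Gamma(x) = lim_{n->oo} x(x+1)...(x+n) / (n! n^x),
   valid for every real x (the entire function 1/Gamma, 0 at x = 0,-1,-2,...).
   Here n = k+1. *)
Definition rgamma_seq (x : R) (k : nat) : R :=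
  poch x (S (S k)) / (INR (fact (S k)) * Rpower (INR (S k)) x).

Definition rgamma (x : R) : R :=
  epsilon (inhabits 0) (fun l => Un_cv (rgamma_seq x) l).

(* Gamma(a+1) = 1 / rgamma(a+1) for a > -1. *)
Definition binom (a s : R) : R :=
  / rgamma (a + 1) * rgamma (s + 1) * rgamma (a - s + 1).

Definition indic (P : R -> Prop) (s : R) : R :=
  if excluded_middle_informative (P s) then 1 else 0.

Definition setA (M q n : R) (s : R) : Prop :=
  Rabs (s - (n - s)) <= q /\ 0 <= s <= M /\ 0 <= n - s <= M.
Definition setB (M q n : R) (s : R) : Prop :=
  Rabs (s - (n + 1 - s)) <= q /\ 0 <= s <= M /\ 0 <= n + 1 - s <= M.
Definition setC (M q n : R) (s : R) : Prop :=
  Rabs (s - (n - s)) <= q /\ 0 <= s + 1 <= M /\ 0 <= n + 1 - s <= M.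

(* Each set A, B, C is a window [lo,hi] symmetric about a centre
   [c/2] (its defining conditions are invariant under [s |-> c - s]).  By
   Pascal's rule [binom a s = binom (a-1) s + binom (a-1) (s-1)] the two
   integrands differ by a difference [H s - H (s-1)] of a product
   [H s = binom (M-1) _ * binom (M-2) _].  Reflecting the shifted term
   about the window turns the difference of the integrals into the integral
   of [H s - H (lo + hi - 1 - s)], an antisymmetric function which is
   nonnegative on the right half; such an integral is nonnegative.  The
   sign on the right half comes from the Gamma functional equation, which
   factors [H s - H (c - 1 - s)] as a nonnegative product times a linear
   factor in [s]. *)

From Stdlib Require Import Reals Lra Lia Factorial ClassicalEpsilon.
From Coquelicot Require Import Coquelicot.
Open Scope R_scope.

Lemma INR_S_pos (k : nat) : 0 < INR (S k).
Proof. apply lt_0_INR; lia. Qed.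

Lemma INR_fact_pos (k : nat) : 0 < INR (fact k).
Proof. apply lt_0_INR, lt_O_fact. Qed.

Lemma Rpower_pos (a b : R) : 0 < Rpower a b.
Proof. apply exp_pos. Qed.

Lemma poch_succ_l (k : nat) (x : R) : poch x (S k) = x * poch (x + 1) k.
Proof.
  revert x; induction k as [|k IH]; intros x.
  - cbn [poch]; simpl INR; ring.
  - change (poch x (S (S k))) with (poch x (S k) * (x + INR (S k))).
    rewrite IH; cbn [poch]; rewrite S_INR; ring.
Qed.

Lemma poch_pos (k : nat) (x : R) : 0 < x -> 0 < poch x k.
Proof.
  intros Hx; induction k as [|k IH]; cbn [poch]; [lra|].
  apply Rmult_lt_0_compat; [exact IH|]. pose proof (pos_INR k); lra.
Qed.

(* The Gauss sequence with the factor [t] removed: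
   [rgamma_seq t k = t * gauss_core k t].  For [t] in [0,1] it decreases in
   [k] at a rate [O(1/k^2)], which drives all the analysis of [rgamma]. *)
Definition gauss_core (k : nat) (t : R) : R :=
  poch (t + 1) (S k) / (INR (fact (S k)) * Rpower (INR (S k)) t).

Lemma rgamma_seq_core (k : nat) (t : R) : rgamma_seq t k = t * gauss_core k t.
Proof.
  unfold rgamma_seq, gauss_core; rewrite (poch_succ_l (S k)).
  pose proof (INR_fact_pos (S k)); pose proof (Rpower_pos (INR (S k)) t).
  field; split; lra.
Qed.

Lemma rgamma_seq_core_succ (k : nat) (t : R) :
  rgamma_seq (t + 1) k = gauss_core k t * (t + 1 + INR (S k)) / INR (S k).
Proof.
  unfold rgamma_seq, gauss_core.
  change (poch (t + 1) (S (S k))) with (poch (t + 1) (S k) * (t + 1 + INR (S k))).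
  rewrite Rpower_plus, Rpower_1 by apply INR_S_pos.
  pose proof (INR_fact_pos (S k)); pose proof (Rpower_pos (INR (S k)) t).
  pose proof (INR_S_pos k).
  field; repeat split; lra.
Qed.

Lemma gauss_core_pos (k : nat) (t : R) : 0 <= t -> 0 < gauss_core k t.
Proof.
  intros Ht; apply Rdiv_lt_0_compat; [apply poch_pos; lra|].
  apply Rmult_lt_0_compat; [apply INR_fact_pos | apply Rpower_pos].
Qed.

Lemma gauss_core_0 (t : R) : gauss_core 0 t = t + 1.
Proof.
  unfold gauss_core, Rpower; cbn [poch fact]; simpl INR.
  rewrite ln_1, Rmult_0_r, exp_0; field.
Qed.

(* [1/(N+1) <= ln (1 + 1/N) <= 1/N], from [ln y <= y - 1]. *)
Lemma ln_succ_bounds (N : R) : 1 <= N -> 1 / (N + 1) <= ln (N + 1) - ln N <= 1 / N.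
Proof.
  intros HN.
  assert (ln_le : forall y, 0 < y -> ln y <= y - 1).
  { intros y Hy; pose proof (exp_ineq1_le (ln y)); rewrite exp_ln in *; lra. }
  assert (ln_div : forall x y, 0 < x -> 0 < y -> ln (x / y) = ln x - ln y).
  { intros x y Hx Hy; unfold Rdiv; rewrite ln_mult, ln_Rinv; try lra.
    now apply Rinv_0_lt_compat. }
  pose proof (ln_le (N / (N + 1)) ltac:(apply Rdiv_lt_0_compat; lra)) as Hlo.
  pose proof (ln_le ((N + 1) / N) ltac:(apply Rdiv_lt_0_compat; lra)) as Hhi.
  rewrite ln_div in Hlo, Hhi by lra.
  replace (N / (N + 1) - 1) with (- (1 / (N + 1))) in Hlo by (field; lra).
  replace ((N + 1) / N - 1) with (1 / N) in Hhi by (field; lra).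
  lra.
Qed.

Lemma gauss_core_step (k : nat) (t : R) :
  let N := INR (S k) in
  gauss_core (S k) t = gauss_core k t * ((1 + t / (N + 1)) * exp (- (t * (ln (N + 1) - ln N)))).
Proof.
  intros N.
  assert (HN1 : INR (S (S k)) = N + 1) by (unfold N; rewrite (S_INR (S k)); ring).
  pose proof (INR_S_pos k) as HN.
  unfold gauss_core.
  change (poch (t + 1) (S (S k))) with (poch (t + 1) (S k) * (t + 1 + INR (S k))).
  change (fact (S (S k))) with (S (S k) * fact (S k))%nat.
  rewrite mult_INR, HN1; fold N; unfold Rpower.
  replace (- (t * (ln (N + 1) - ln N))) with (t * ln N + - (t * ln (N + 1))) by ring.
  rewrite exp_plus, exp_Ropp.
  pose proof (INR_fact_pos (S k)); pose proof (exp_pos (t * ln N)).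
  pose proof (exp_pos (t * ln (N + 1))).
  field; repeat split; fold N in HN; lra.
Qed.

Lemma gauss_core_step_bounds (k : nat) (t : R) : 0 <= t <= 1 ->
  0 <= gauss_core k t - gauss_core (S k) t
    <= gauss_core k t * (2 / INR (S k) - 2 / INR (S (S k))).
Proof.
  intros Ht.
  pose proof (gauss_core_step k t) as Hstep; cbv zeta in Hstep.
  set (N := INR (S k)) in *.
  assert (HN : 1 <= N) by (unfold N; rewrite S_INR; pose proof (pos_INR k); lra).
  assert (HN1 : INR (S (S k)) = N + 1) by (unfold N; rewrite (S_INR (S k)); ring).
  destruct (ln_succ_bounds N HN) as [HL1 HL2].
  set (L := ln (N + 1) - ln N) in *.
  set (c := 1 + t / (N + 1)) in *.
  set (E := exp (- (t * L))) in *.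
  assert (Ht1 : 0 <= t / (N + 1)) by (apply Rmult_le_pos; [lra | left; apply Rinv_0_lt_compat; lra]).
  assert (HtL : t / (N + 1) <= t * L <= t / N).
  { replace (t / (N + 1)) with (t * (1 / (N + 1))) by (field; lra).
    replace (t / N) with (t * (1 / N)) by (field; lra).
    split; apply Rmult_le_compat_l; lra. }
  (* [c * E <= 1] because [E <= exp (-t/(N+1)) <= 1/c]. *)
  assert (Hup : c * E <= 1).
  { assert (HE : E <= / c).
    { apply Rle_trans with (exp (- (t / (N + 1)))).
      - destruct (Req_dec (t * L) (t / (N + 1))) as [He|He];
          [unfold E; rewrite He; lra | left; apply exp_increasing; lra].
      - rewrite exp_Ropp; apply Rinv_le_contravar; [unfold c; lra | apply exp_ineq1_le]. }
    apply Rle_trans with (c * / c); [apply Rmult_le_compat_l; [unfold c; lra | exact HE]|].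
    right; field; unfold c; lra. }
  (* [c * E >= c * (1 - t/N) = 1 - (t + t^2)/(N(N+1)) >= 1 - 2/(N(N+1))]. *)
  assert (Hlo : 1 - 2 / (N * (N + 1)) <= c * E).
  { assert (HE : 1 - t / N <= E) by (unfold E; pose proof (exp_ineq1_le (- (t * L))); lra).
    apply Rle_trans with (c * (1 - t / N)); [|apply Rmult_le_compat_l; [unfold c; lra | exact HE]].
    replace (c * (1 - t / N)) with (1 - (t + t * t) / (N * (N + 1))) by (unfold c; field; lra).
    assert ((t + t * t) / (N * (N + 1)) <= 2 / (N * (N + 1))).
    { apply Rmult_le_compat_r; [left; apply Rinv_0_lt_compat; nra | nra]. }
    lra. }
  pose proof (gauss_core_pos k t ltac:(lra)).
  rewrite Hstep, HN1.
  replace (2 / N - 2 / (N + 1)) with (2 / (N * (N + 1))) by (field; lra).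
  split; nra.
Qed.

Lemma gauss_core_drift (k p : nat) (t : R) : 0 <= t <= 1 ->
  0 <= gauss_core k t - gauss_core (k + p) t
    <= gauss_core k t * (2 / INR (S k) - 2 / INR (S (k + p))).
Proof.
  intros Ht; induction p as [|p IH].
  - rewrite Nat.add_0_r; lra.
  - rewrite Nat.add_succ_r.
    pose proof (gauss_core_step_bounds (k + p) t Ht) as Hs.
    pose proof (gauss_core_pos k t ltac:(lra)).
    assert (Hdelta : 0 <= 2 / INR (S (k + p)) - 2 / INR (S (S (k + p)))).
    { pose proof (INR_S_pos (k + p)) as HN; rewrite (S_INR (S (k + p))).
      assert (2 / (INR (S (k + p)) + 1) <= 2 / INR (S (k + p)))
        by (apply Rmult_le_compat_l; [lra | apply Rinv_le_contravar; lra]).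
      lra. }
    split; [lra|].
    apply Rle_trans with (gauss_core k t * (2 / INR (S k) - 2 / INR (S (k + p)))
                          + gauss_core k t * (2 / INR (S (k + p)) - 2 / INR (S (S (k + p))))); [|lra].
    replace (gauss_core k t - gauss_core (S (k + p)) t) with
      ((gauss_core k t - gauss_core (k + p) t) + (gauss_core (k + p) t - gauss_core (S (k + p)) t)) by ring.
    apply Rplus_le_compat; [lra|].
    apply Rle_trans with (1 := proj2 Hs); apply Rmult_le_compat_r; [exact Hdelta | lra].
Qed.

Lemma gauss_core_le_2 (k : nat) (t : R) : 0 <= t <= 1 -> gauss_core k t <= 2.
Proof.
  intros Ht; pose proof (gauss_core_drift 0 k t Ht) as H; rewrite gauss_core_0, Nat.add_0_l in H; lra.
Qed.

Lemma gauss_core_cauchy (k p : nat) (t : R) : 0 <= t <= 1 ->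
  0 <= gauss_core k t - gauss_core (k + p) t <= 4 / INR (S k).
Proof.
  intros Ht; pose proof (gauss_core_drift k p t Ht) as [H0 H1]; split; [exact H0|].
  pose proof (gauss_core_le_2 k t Ht); pose proof (gauss_core_pos k t ltac:(lra)).
  pose proof (INR_S_pos k); pose proof (INR_S_pos (k + p)).
  assert (0 <= 2 / INR (S (k + p))) by (apply Rmult_le_pos; [lra | left; apply Rinv_0_lt_compat; lra]).
  assert (0 <= 2 / INR (S k)) by (apply Rmult_le_pos; [lra | left; apply Rinv_0_lt_compat; lra]).
  replace (4 / INR (S k)) with (2 * (2 / INR (S k))) by (field; lra).
  nra.
Qed.

Lemma rgamma_seq_cauchy (x : R) (k p : nat) : 0 <= x <= 2 ->
  Rabs (rgamma_seq x k - rgamma_seq x (k + p)) <= 8 / INR (S k).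
Proof.
  intros Hx; pose proof (INR_S_pos k) as HN; pose proof (INR_S_pos (k + p)) as HNp.
  assert (HNle : INR (S k) <= INR (S (k + p))) by (apply le_INR; lia).
  assert (H48 : 4 / INR (S k) <= 8 / INR (S k))
    by (apply Rmult_le_compat_r; [left; apply Rinv_0_lt_compat|]; lra).
  destruct (Rle_dec x 1) as [Hx1|Hx1].
  - rewrite !rgamma_seq_core, <- Rmult_minus_distr_l.
    destruct (gauss_core_cauchy k p x ltac:(lra)).
    rewrite Rabs_mult, !Rabs_pos_eq by lra.
    apply Rle_trans with (1 * (4 / INR (S k))); [apply Rmult_le_compat; lra | lra].
  - set (t := x - 1); replace x with (t + 1) by (unfold t; ring).
    assert (Ht : 0 <= t <= 1) by (unfold t; lra).
    rewrite !rgamma_seq_core_succ.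
    destruct (gauss_core_cauchy k p t Ht).
    pose proof (gauss_core_pos k t ltac:(lra)); pose proof (gauss_core_pos (k + p) t ltac:(lra)).
    pose proof (gauss_core_le_2 k t Ht); pose proof (gauss_core_le_2 (k + p) t Ht).
    set (N1 := INR (S k)) in *; set (N2 := INR (S (k + p))) in *.
    (* [u * (t + 1 + N) / N = u + u (t+1)/N], and each correction lies in [0, 4/N1]. *)
    replace (gauss_core k t * (t + 1 + N1) / N1 - gauss_core (k + p) t * (t + 1 + N2) / N2)
      with ((gauss_core k t - gauss_core (k + p) t)
            + gauss_core k t * (t + 1) / N1 - gauss_core (k + p) t * (t + 1) / N2) by (field; lra).
    assert (0 <= gauss_core k t * (t + 1) / N1 <= 4 / N1).
    { split; apply Rmult_le_compat_r || apply Rmult_le_pos;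
        try (left; apply Rinv_0_lt_compat; lra); nra. }
    assert (0 <= gauss_core (k + p) t * (t + 1) / N2 <= 4 / N1).
    { split; [apply Rmult_le_pos; [nra | left; apply Rinv_0_lt_compat; lra]|].
      apply Rle_trans with (4 / N2).
      - apply Rmult_le_compat_r; [left; apply Rinv_0_lt_compat; lra | nra].
      - apply Rmult_le_compat_l; [lra | apply Rinv_le_contravar; lra]. }
    apply Rabs_le; split; lra.
Qed.

Lemma cv_const (c : R) : Un_cv (fun _ => c) c.
Proof.
  intros eps Heps; exists 0%nat; intros n _.
  unfold Rdist; rewrite Rminus_diag, Rabs_R0; lra.
Qed.

Lemma cv_le_eventually (v w : nat -> R) (l m : R) (K : nat) :
  Un_cv v l -> Un_cv w m -> (forall n, (K <= n)%nat -> v n <= w n) -> l <= m.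
Proof.
  intros Hv Hw Hle.
  apply (Rle_cv_lim (Un := fun n => v (n + K)%nat) (Vn := fun n => w (n + K)%nat)).
  - intros n; apply Hle; lia.
  - now apply CV_shift'.
  - now apply CV_shift'.
Qed.

Lemma cv_eventually_ext (v w : nat -> R) (l : R) (K : nat) :
  Un_cv v l -> (forall n, (K <= n)%nat -> w n = v n) -> Un_cv w l.
Proof.
  intros Hv He eps Heps; destruct (Hv eps Heps) as [N HN].
  exists (Nat.max N K); intros n Hn; rewrite He by lia; apply HN; lia.
Qed.

Lemma cv_ratio (c d : R) : Un_cv (fun k => (INR k + c) / (INR k + d)) 1.
Proof.
  intros eps Heps.
  destruct (INR_unbounded (Rabs d + Rabs (c - d) / eps + 1)) as [N HN].
  exists N; intros n Hn; apply le_INR in Hn.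
  pose proof (Rabs_pos (c - d)); pose proof (Rle_abs (- d)); rewrite Rabs_Ropp in *.
  assert (Hq : 0 <= Rabs (c - d) / eps)
    by (apply Rmult_le_pos; [lra | left; apply Rinv_0_lt_compat; lra]).
  set (D := INR n + d).
  assert (HD : Rabs (c - d) / eps < D) by (unfold D; lra).
  unfold Rdist; replace ((INR n + c) / D - 1) with ((c - d) / D) by (unfold D; field; lra).
  unfold Rdiv; rewrite Rabs_mult, Rabs_inv, (Rabs_pos_eq D) by lra.
  apply Rmult_lt_reg_r with D; [lra|]; rewrite Rmult_assoc, Rinv_l by lra.
  apply Rmult_lt_compat_l with (r := eps) in HD; [|lra].
  replace (eps * (Rabs (c - d) / eps)) with (Rabs (c - d)) in HD by (field; lra).
  lra.
Qed.

Lemma cv_of_rate (v : nat -> R) (C : R) :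
  (forall k p, Rabs (v k - v (k + p)%nat) <= C / INR (S k)) -> exists l, Un_cv v l.
Proof.
  intros Hrate.
  assert (Hcauchy : Cauchy_crit v).
  { intros eps Heps.
    destruct (INR_unbounded (2 * C / eps)) as [N HN].
    exists N; intros n m Hn Hm; unfold Rdist.
    pose proof (Hrate N (n - N)%nat) as H1; pose proof (Hrate N (m - N)%nat) as H2.
    replace (N + (n - N))%nat with n in H1 by lia.
    replace (N + (m - N))%nat with m in H2 by lia.
    pose proof (INR_S_pos N) as HN1.
    assert (Hsmall : 2 * (C / INR (S N)) < eps).
    { rewrite S_INR in *; pose proof (pos_INR N).
      apply Rmult_lt_reg_r with (INR N + 1); [lra|].
      replace (2 * (C / (INR N + 1)) * (INR N + 1)) with (2 * C) by (field; lra).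
      apply Rmult_lt_compat_l with (r := eps) in HN; [|lra].
      replace (eps * (2 * C / eps)) with (2 * C) in HN by (field; lra). nra. }
    replace (v n - v m) with (- (v N - v n) + (v N - v m)) by ring.
    eapply Rle_lt_trans; [apply Rabs_triang|]; rewrite Rabs_Ropp; lra. }
  destruct (Rcomplete.R_complete v Hcauchy) as [l Hl]; eauto.
Qed.

Lemma cv_rate_bound (v : nat -> R) (l C : R) : Un_cv v l ->
  (forall k p, Rabs (v k - v (k + p)%nat) <= C / INR (S k)) ->
  forall k, Rabs (v k - l) <= C / INR (S k).
Proof.
  intros Hl Hrate k.
  apply (cv_le_eventually (fun n => Rabs (v k - v n)) (fun _ => C / INR (S k)) _ _ k).
  - apply cv_cvabs, CV_minus; [apply cv_const | exact Hl].
  - apply cv_const.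
  - intros n Hn; replace n with (k + (n - k))%nat by lia; apply Hrate.
Qed.

(* Pointwise continuity rules in the shape [fun s => ...] produced by goals. *)
Lemma cont_const (c x : R) : continuity_pt (fun _ => c) x.
Proof. apply continuity_pt_const; intros u v; reflexivity. Qed.
Lemma cont_id (x : R) : continuity_pt (fun s => s) x.
Proof. apply (derivable_continuous_pt id), derivable_pt_id. Qed.
Lemma cont_plus (f g : R -> R) (x : R) :
  continuity_pt f x -> continuity_pt g x -> continuity_pt (fun s => f s + g s) x.
Proof. apply continuity_pt_plus. Qed.
Lemma cont_minus (f g : R -> R) (x : R) :
  continuity_pt f x -> continuity_pt g x -> continuity_pt (fun s => f s - g s) x.
Proof. apply continuity_pt_minus. Qed.
Lemma cont_mult (f g : R -> R) (x : R) :
  continuity_pt f x -> continuity_pt g x -> continuity_pt (fun s => f s * g s) x.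
Proof. apply continuity_pt_mult. Qed.
Lemma cont_opp (f : R -> R) (x : R) :
  continuity_pt f x -> continuity_pt (fun s => - f s) x.
Proof. apply continuity_pt_opp. Qed.
Lemma cont_comp (f phi : R -> R) (x : R) :
  continuity_pt phi x -> continuity_pt f (phi x) -> continuity_pt (fun s => f (phi s)) x.
Proof. apply (continuity_pt_comp phi f). Qed.

Ltac continuity_affine :=
  repeat (apply cont_plus || apply cont_minus || apply cont_mult || apply cont_opp
          || apply cont_id || apply cont_const).

(* The Gauss sequence satisfies the functional equation of [1/Gamma] up to
   a factor tending to 1. *)
Lemma rgamma_seq_shift (k : nat) (x : R) :
  rgamma_seq x k * (INR k + (x + 2)) = x * rgamma_seq (x + 1) k * (INR k + 1).
Proof.
  unfold rgamma_seq; rewrite (poch_succ_l (S k) x).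
  change (poch (x + 1) (S (S k))) with (poch (x + 1) (S k) * (x + 1 + INR (S k))).
  rewrite Rpower_plus, Rpower_1 by apply INR_S_pos.
  pose proof (INR_fact_pos (S k)); pose proof (Rpower_pos (INR (S k)) x).
  pose proof (INR_S_pos k); rewrite S_INR in *.
  field; repeat split; lra.
Qed.

Lemma rgamma_seq_cv_down (x l : R) :
  Un_cv (rgamma_seq (x + 1)) l -> Un_cv (rgamma_seq x) (x * l).
Proof.
  intros Hl; rewrite <- (Rmult_1_r (x * l)).
  destruct (INR_unbounded (Rabs x + 2)) as [K HK].
  apply cv_eventually_ext with (fun k => x * rgamma_seq (x + 1) k * ((INR k + 1) / (INR k + (x + 2)))) K.
  - apply CV_mult; [apply CV_mult; [apply cv_const | exact Hl] | apply cv_ratio].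
  - intros k Hk; apply le_INR in Hk.
    pose proof (Rle_abs (- x)); rewrite Rabs_Ropp in *.
    pose proof (rgamma_seq_shift k x) as Hs.
    apply (Rmult_eq_reg_r (INR k + (x + 2))); [rewrite Hs; field | ]; lra.
Qed.

Lemma rgamma_seq_cv_up (x l : R) : x <> 0 ->
  Un_cv (rgamma_seq x) l -> Un_cv (rgamma_seq (x + 1)) (l * 1 * / x).
Proof.
  intros Hx Hl.
  apply cv_eventually_ext with (fun k => rgamma_seq x k * ((INR k + (x + 2)) / (INR k + 1)) * / x) 0%nat.
  - apply CV_mult; [apply CV_mult; [exact Hl | apply cv_ratio] | apply cv_const].
  - intros k _; pose proof (pos_INR k); pose proof (rgamma_seq_shift k x) as Hs.
    apply (Rmult_eq_reg_r ((INR k + 1) * x)); [|apply Rmult_integral_contrapositive; lra].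
    replace (rgamma_seq x k * ((INR k + (x + 2)) / (INR k + 1)) * / x * ((INR k + 1) * x))
      with (rgamma_seq x k * (INR k + (x + 2))) by (field; lra).
    rewrite Hs; ring.
Qed.

(* The Gauss sequence converges at every real point: on [0,2] by the uniform
   Cauchy estimate, elsewhere by shifting with the functional equation. *)
Lemma rgamma_seq_converges (x : R) : exists l, Un_cv (rgamma_seq x) l.
Proof.
  assert (Hband : forall m x, - INR m <= x <= INR m + 2 -> exists l, Un_cv (rgamma_seq x) l).
  { induction m as [|m IH]; intros y Hy.
    - apply (cv_of_rate _ 8); intros k p; apply rgamma_seq_cauchy; simpl in Hy; lra.
    - rewrite S_INR in Hy; pose proof (pos_INR m).
      destruct (Rle_dec (- INR m) y) as [Hlo|Hlo]; destruct (Rle_dec y (INR m + 2)) as [Hhi|Hhi].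
      + apply IH; lra.
      + replace y with ((y - 1) + 1) by ring.
        destruct (IH (y - 1) ltac:(lra)) as [l Hl].
        eexists; apply rgamma_seq_cv_up; [lra | exact Hl].
      + destruct (IH (y + 1) ltac:(lra)) as [l Hl].
        eexists; apply rgamma_seq_cv_down; exact Hl.
      + lra. }
  destruct (INR_unbounded (Rabs x)) as [m Hm].
  apply (Hband m); pose proof (Rle_abs x); pose proof (Rle_abs (- x)); rewrite Rabs_Ropp in *; lra.
Qed.

Lemma rgamma_cv (x : R) : Un_cv (rgamma_seq x) (rgamma x).
Proof.
  unfold rgamma; apply (epsilon_spec (inhabits 0) (fun l => Un_cv (rgamma_seq x) l)).
  apply rgamma_seq_converges.
Qed.

Lemma rgamma_rec (x : R) : rgamma x = x * rgamma (x + 1).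
Proof.
  exact (UL_sequence _ _ _ (rgamma_cv x) (rgamma_seq_cv_down x _ (rgamma_cv (x + 1)))).
Qed.

Lemma rgamma_rec_at (x y : R) : y = x + 1 -> rgamma x = x * rgamma y.
Proof. intros ->; apply rgamma_rec. Qed.

Lemma rgamma_approx (x : R) (k : nat) : 0 <= x <= 2 ->
  Rabs (rgamma_seq x k - rgamma x) <= 8 / INR (S k).
Proof.
  intros Hx; apply (cv_rate_bound _ _ _ (rgamma_cv x)).
  intros j p; apply rgamma_seq_cauchy, Hx.
Qed.

(* Positivity on (0,1] comes from the lower bound [gauss_core n >= gauss_core 2 / 3];
   it propagates to all positive arguments by the functional equation. *)
Lemma rgamma_pos (x : R) : 0 < x -> 0 < rgamma x.
Proof.
  assert (Hbase : forall x, 0 < x <= 1 -> 0 < rgamma x).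
  { intros y Hy; pose proof (gauss_core_pos 2 y ltac:(lra)) as Hu2.
    apply Rlt_le_trans with (y * (gauss_core 2 y / 3)); [apply Rmult_lt_0_compat; lra|].
    apply (cv_le_eventually (fun _ => y * (gauss_core 2 y / 3)) (rgamma_seq y) _ _ 2);
      [apply cv_const | apply rgamma_cv|].
    intros n Hn; rewrite rgamma_seq_core; apply Rmult_le_compat_l; [lra|].
    destruct (gauss_core_drift 2 (n - 2) y ltac:(lra)) as [_ Hd].
    replace (2 + (n - 2))%nat with n in Hd by lia.
    replace (INR (S 2)) with 3 in Hd by (simpl; ring).
    assert (0 <= 2 / INR (S n))
      by (apply Rmult_le_pos; [lra | left; apply Rinv_0_lt_compat, INR_S_pos]).
    nra. }
  assert (Hband : forall m x, 0 < x <= INR m + 1 -> 0 < rgamma x).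
  { induction m as [|m IH]; intros y Hy; [apply Hbase; simpl in Hy; lra|].
    rewrite S_INR in Hy; destruct (Rle_dec y 1) as [Hy1|Hy1]; [apply Hbase; lra|].
    pose proof (IH (y - 1) ltac:(lra)) as Hpos.
    rewrite (rgamma_rec_at (y - 1) y) in Hpos by ring.
    apply (Rmult_lt_reg_l (y - 1)); lra. }
  intros Hx; destruct (INR_unbounded x) as [m Hm]; apply (Hband m); lra.
Qed.

Lemma rgamma_nonneg (x : R) : 0 <= x -> 0 <= rgamma x.
Proof.
  intros [Hx|<-]; [left; apply rgamma_pos, Hx|].
  rewrite rgamma_rec, Rmult_0_l; lra.
Qed.

Lemma poch_continuous (k : nat) (x : R) : continuity_pt (fun y => poch y k) x.
Proof.
  induction k as [|k IH]; cbn [poch]; [apply cont_const|].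
  apply cont_mult; [exact IH | continuity_affine].
Qed.

Lemma rgamma_seq_continuous (k : nat) (x : R) : continuity_pt (fun y => rgamma_seq y k) x.
Proof.
  unfold rgamma_seq.
  apply (continuity_pt_div (fun y => poch y (S (S k)))
           (fun y => INR (fact (S k)) * Rpower (INR (S k)) y)); [apply poch_continuous| |].
  - apply cont_mult; [apply cont_const|]; unfold Rpower.
    apply (cont_comp exp); [continuity_affine | apply derivable_continuous_pt, derivable_pt_exp].
  - pose proof (INR_fact_pos (S k)); pose proof (Rpower_pos (INR (S k)) x); nra.
Qed.

(* On (0,2) [rgamma] is a uniform limit of continuous functions. *)
Lemma rgamma_continuous_base (x : R) : 0 < x < 2 -> continuity_pt rgamma x.
Proof.
  intros Hx.
  apply (CVU_continuity (fun k y => rgamma_seq y k) rgamma 1 (mkposreal 1 Rlt_0_1));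
    [| intros n y _; apply rgamma_seq_continuous | unfold Boule; simpl; apply Rabs_def1; lra].
  intros eps Heps; destruct (INR_unbounded (8 / eps)) as [N HN]; exists N.
  intros n y Hn Hy; unfold Boule in Hy; simpl in Hy; apply Rabs_def2 in Hy.
  rewrite Rabs_minus_sym; eapply Rle_lt_trans; [apply rgamma_approx; lra|].
  apply le_INR in Hn; rewrite S_INR; pose proof (pos_INR N).
  apply (Rmult_lt_reg_r (INR n + 1)); [lra|].
  replace (8 / (INR n + 1) * (INR n + 1)) with 8 by (field; lra).
  apply (Rmult_lt_compat_l eps) in HN; [|lra].
  replace (eps * (8 / eps)) with 8 in HN by (field; lra); nra.
Qed.

(* [1/Gamma] is continuous everywhere: the functional equation transports
   continuity from (0,2) downwards and upwards. *)
Lemma rgamma_continuous : continuity rgamma.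
Proof.
  assert (Hdown : forall m x, - INR m < x < 2 -> continuity_pt rgamma x).
  { induction m as [|m IH]; intros x Hx; [apply rgamma_continuous_base; simpl in Hx; lra|].
    rewrite S_INR in Hx; destruct (Rlt_dec 0 x) as [H0|H0]; [apply rgamma_continuous_base; lra|].
    apply (continuity_pt_locally_ext (fun y => y * rgamma (y + 1)) _ 1 x Rlt_0_1);
      [intros y _; symmetry; apply rgamma_rec|].
    apply cont_mult; [apply cont_id|].
    apply (cont_comp rgamma); [continuity_affine | apply IH; lra]. }
  assert (Hup : forall m x, 0 < x < INR m + 2 -> continuity_pt rgamma x).
  { induction m as [|m IH]; intros x Hx; [apply rgamma_continuous_base; simpl in Hx; lra|].
    rewrite S_INR in Hx; pose proof (pos_INR m).
    destruct (Rlt_dec x (INR m + 2)) as [H0|H0]; [apply IH; lra|].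
    apply (continuity_pt_locally_ext (fun y => rgamma (y - 1) / (y - 1)) _ 1 x Rlt_0_1).
    - intros y Hy; unfold Rdist in Hy; apply Rabs_def2 in Hy.
      rewrite (rgamma_rec_at (y - 1) y) by ring; field; lra.
    - apply (continuity_pt_div (fun y => rgamma (y - 1)) (fun y => y - 1)); [| continuity_affine | lra].
      apply (cont_comp rgamma); [continuity_affine | apply IH; lra]. }
  intros x; destruct (INR_unbounded (Rabs x)) as [m Hm].
  pose proof (Rle_abs x); pose proof (Rle_abs (- x)); rewrite Rabs_Ropp in *.
  destruct (Rlt_dec 0 x); [apply (Hup m) | apply (Hdown (S m)); rewrite S_INR]; lra.
Qed.

Lemma binom_def (a s A S T : R) : a + 1 = A -> s + 1 = S -> a - s + 1 = T ->
  binom a s = / rgamma A * rgamma S * rgamma T.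
Proof. intros <- <- <-; reflexivity. Qed.

Lemma inv_rgamma_pos (x : R) : 0 < x -> 0 <= / rgamma x.
Proof. intros Hx; left; apply Rinv_0_lt_compat, rgamma_pos, Hx. Qed.

Lemma binom_pascal (a b s : R) : a = b + 1 -> -1 < b ->
  binom a s = binom b s + binom b (s - 1).
Proof.
  intros -> Hb.
  rewrite (binom_def (b + 1) s (b + 2) (s + 1) (b - s + 2)),
          (binom_def b s (b + 1) (s + 1) (b - s + 1)),
          (binom_def b (s - 1) (b + 1) s (b - s + 2)) by ring.
  rewrite (rgamma_rec_at (b + 1) (b + 2)), (rgamma_rec_at s (s + 1)),
          (rgamma_rec_at (b - s + 1) (b - s + 2)) by ring.
  pose proof (rgamma_pos (b + 2) ltac:(lra)).
  field; split; lra.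
Qed.

(* Exchanging the lower arguments of [binom a _ * binom (a-1) _] moves the
   larger one to the upper row:
   [binom a x binom (a-1) y - binom a y binom (a-1) x]
     [= (x - y) Gamma(a) Gamma(a+1) / (Gamma(x+1) Gamma(y+1) Gamma(a-x+1) Gamma(a-y+1))]. *)
Lemma binom_cross_swap (a b x y : R) : a = b + 1 -> 0 < a ->
  -1 <= y <= x -> x <= a + 1 ->
  binom a y * binom b x <= binom a x * binom b y.
Proof.
  intros Hab Ha Hyx Hx.
  rewrite (binom_def a x (a + 1) (x + 1) (a - x + 1)), (binom_def b y a (y + 1) (a - y)),
          (binom_def a y (a + 1) (y + 1) (a - y + 1)), (binom_def b x a (x + 1) (a - x)) by lra.
  rewrite (rgamma_rec_at (a - y) (a - y + 1)), (rgamma_rec_at (a - x) (a - x + 1)) by ring.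
  cut (0 <= / rgamma (a + 1) * / rgamma a
             * (rgamma (x + 1) * rgamma (y + 1) * rgamma (a - x + 1) * rgamma (a - y + 1))
             * (x - y)); [intros; nra|].
  pose proof (inv_rgamma_pos (a + 1)); pose proof (inv_rgamma_pos a).
  repeat apply Rmult_le_pos; try lra; apply rgamma_nonneg; lra.
Qed.

(* Moving one unit from the lower argument of the first factor to the second:
   [binom a x binom (a-1) y - binom a (y+1) binom (a-1) (x-1)] is a nonnegative
   multiple of [y + 1 - x]. *)
Lemma binom_cross_shift (a b x y : R) : a = b + 1 -> 0 < a ->
  -1 <= x <= y + 1 -> x <= a + 1 -> -2 <= y <= a ->
  binom a (y + 1) * binom b (x - 1) <= binom a x * binom b y.
Proof.
  intros Hab Ha Hxy Hx Hy.
  rewrite (binom_def a x (a + 1) (x + 1) (a - x + 1)), (binom_def b y a (y + 1) (a - y)),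
          (binom_def a (y + 1) (a + 1) (y + 2) (a - y)),
          (binom_def b (x - 1) a x (a - x + 1)) by lra.
  rewrite (rgamma_rec_at (y + 1) (y + 2)), (rgamma_rec_at x (x + 1)) by ring.
  cut (0 <= / rgamma (a + 1) * / rgamma a
             * (rgamma (x + 1) * rgamma (y + 2) * rgamma (a - x + 1) * rgamma (a - y))
             * (y + 1 - x)); [intros; nra|].
  pose proof (inv_rgamma_pos (a + 1)); pose proof (inv_rgamma_pos a).
  repeat apply Rmult_le_pos; try lra; apply rgamma_nonneg; lra.
Qed.

Lemma binom_continuous (a : R) (phi : R -> R) (x : R) :
  continuity_pt phi x -> continuity_pt (fun s => binom a (phi s)) x.
Proof.
  intros Hphi; unfold binom.
  repeat apply cont_mult; try apply cont_const;
    apply (cont_comp rgamma); try apply rgamma_continuous; continuity_affine; exact Hphi.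
Qed.

Lemma ex_RInt_continuity (f : R -> R) (a b : R) : continuity f -> ex_RInt f a b.
Proof.
  intros Hf; apply (ex_RInt_continuous (V := R_CompleteNormedModule)); intros z _.
  apply continuity_pt_filterlim, Hf.
Qed.

Lemma RInt_Rminus (f g : R -> R) (a b : R) : continuity f -> continuity g ->
  RInt (fun s => f s - g s) a b = RInt f a b - RInt g a b.
Proof.
  intros Hf Hg.
  exact (RInt_minus (V := R_CompleteNormedModule) f g a b
           (ex_RInt_continuity f a b Hf) (ex_RInt_continuity g a b Hg)).
Qed.

Lemma RInt_reflect (f : R -> R) (a b : R) : continuity f ->
  RInt (fun s => f (a + b - s)) a b = RInt f a b.
Proof.
  intros Hf.
  pose proof (RInt_comp_lin f (-1) (a + b) a b) as H.
  replace (-1 * a + (a + b)) with b in H by ring.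
  replace (-1 * b + (a + b)) with a in H by ring.
  specialize (H (ex_RInt_continuity f b a Hf)).
  rewrite <- (opp_RInt_swap f a b (ex_RInt_continuity f a b Hf)) in H.
  rewrite (RInt_ext _ (fun y => opp (f (a + b - y)))) in H.
  2:{ intros y _; change (-1 * f (-1 * y + (a + b)) = - f (a + b - y)).
      replace (-1 * y + (a + b)) with (a + b - y) by ring; ring. }
  rewrite (RInt_opp (V := R_CompleteNormedModule)) in H.
  - change (- RInt (fun s => f (a + b - s)) a b = - RInt f a b) in H; lra.
  - apply ex_RInt_continuity; intros x; apply (cont_comp f); [continuity_affine | apply Hf].
Qed.

(* A function that is antisymmetric about [c = lo + hi - 1] and nonnegative to
   the right of [c/2] has nonnegative integral over [lo,hi]: the part over
   [lo, hi-1] cancels, and what remains lies to the right of [c/2]. *)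
Lemma RInt_antisymmetric_nonneg (psi : R -> R) (lo hi : R) : lo <= hi -> continuity psi ->
  (forall s, psi (lo + hi - 1 - s) = - psi s) ->
  (forall s, lo <= s <= hi -> lo + hi - 1 <= 2 * s -> 0 <= psi s) ->
  0 <= RInt psi lo hi.
Proof.
  intros Hlh Hc Hanti Hpos.
  destruct (Rle_dec 1 (hi - lo)) as [Hlong|Hshort].
  - rewrite <- (RInt_Chasles (V := R_CompleteNormedModule) psi lo (hi - 1) hi)
      by apply ex_RInt_continuity, Hc.
    assert (Hcancel : RInt psi lo (hi - 1) = 0).
    { pose proof (RInt_reflect psi lo (hi - 1) Hc) as Hr.
      rewrite (RInt_ext _ (fun s => opp (psi s))) in Hr
        by (intros x _; replace (lo + (hi - 1) - x) with (lo + hi - 1 - x) by ring; apply Hanti).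
      rewrite (RInt_opp (V := R_CompleteNormedModule)) in Hr by apply ex_RInt_continuity, Hc.
      change (- RInt psi lo (hi - 1) = RInt psi lo (hi - 1)) in Hr; lra. }
    change (0 <= RInt psi lo (hi - 1) + RInt psi (hi - 1) hi); rewrite Hcancel, Rplus_0_l.
    apply RInt_ge_0; [lra | apply ex_RInt_continuity, Hc | intros x Hx; apply Hpos; lra].
  - apply RInt_ge_0; [lra | apply ex_RInt_continuity, Hc | intros x Hx; apply Hpos; lra].
Qed.

(* Comparison of integrals whose integrands differ by a backward difference
   [H s - H (s-1)]: reflecting the shifted term turns the difference of the
   integrals into the integral of [H s - H (lo + hi - 1 - s)]. *)
Lemma RInt_telescope_le (F1 F2 H : R -> R) (lo hi : R) : lo <= hi ->
  continuity F1 -> continuity F2 -> continuity H ->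
  (forall s, F1 s - F2 s = H s - H (s - 1)) ->
  (forall s, lo <= s <= hi -> lo + hi - 1 <= 2 * s -> H (lo + hi - 1 - s) <= H s) ->
  RInt F2 lo hi <= RInt F1 lo hi.
Proof.
  intros Hlh C1 C2 CH Hdiff Hmono.
  assert (Cshift : forall c, continuity (fun s => H (c - s))).
  { intros c x; apply (cont_comp H); [continuity_affine | apply CH]. }
  assert (CH1 : continuity (fun s => H (s - 1))).
  { intros x; apply (cont_comp H); [continuity_affine | apply CH]. }
  assert (Hpsi : 0 <= RInt (fun s => H s - H (lo + hi - 1 - s)) lo hi).
  { apply RInt_antisymmetric_nonneg; [exact Hlh | intros x; apply cont_minus; [apply CH | apply Cshift] | |].
    - intros s; replace (lo + hi - 1 - (lo + hi - 1 - s)) with s by ring; ring.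
    - intros s Hs Hc; specialize (Hmono s Hs Hc); lra. }
  rewrite (RInt_Rminus H (fun s => H (lo + hi - 1 - s))) in Hpsi by easy.
  rewrite (RInt_ext (fun s => H (lo + hi - 1 - s)) (fun s => H (lo + hi - s - 1))) in Hpsi
    by (intros x _; f_equal; ring).
  pose proof (RInt_reflect (fun s => H (s - 1)) lo hi CH1) as Hrefl; cbv beta in Hrefl.
  rewrite Hrefl in Hpsi.
  rewrite <- (RInt_Rminus H (fun s => H (s - 1))) in Hpsi by easy.
  rewrite (RInt_ext _ (fun s => F1 s - F2 s)) in Hpsi by (intros x _; symmetry; apply Hdiff).
  rewrite RInt_Rminus in Hpsi by easy; lra.
Qed.

Lemma indic_in (P : R -> Prop) (s : R) : P s -> indic P s = 1.
Proof. intros Hs; unfold indic; destruct (excluded_middle_informative (P s)); tauto. Qed.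

Lemma indic_out (P : R -> Prop) (s : R) : ~ P s -> indic P s = 0.
Proof. intros Hs; unfold indic; destruct (excluded_middle_informative (P s)); tauto. Qed.

Lemma RInt_agree (f g : R -> R) (a b : R) : a <= b -> ex_RInt g a b ->
  (forall x, a < x < b -> f x = g x) -> ex_RInt f a b /\ RInt f a b = RInt g a b.
Proof.
  intros Hab Hg Heq.
  assert (Heq' : forall x, Rmin a b < x < Rmax a b -> f x = g x)
    by (rewrite Rmin_left, Rmax_right by lra; exact Heq).
  split; [apply (ex_RInt_ext g); [intros x Hx; symmetry; apply Heq', Hx | exact Hg]|].
  apply RInt_ext, Heq'.
Qed.

Lemma RInt_zero (a b : R) : RInt (fun _ => 0) a b = 0.
Proof.
  rewrite (RInt_const (V := R_CompleteNormedModule)); change ((b - a) * 0 = 0); ring.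
Qed.

Lemma RInt_indicator (P : R -> Prop) (F : R -> R) (lo hi a b : R) :
  a <= lo <= hi -> hi <= b -> (forall s, P s <-> lo <= s <= hi) -> continuity F ->
  ex_RInt (fun s => indic P s * F s) a b /\ RInt (fun s => indic P s * F s) a b = RInt F lo hi.
Proof.
  intros Hlo Hhi HP HF; set (f := fun s => indic P s * F s).
  assert (Hout : forall s, ~ lo <= s <= hi -> f s = 0)
    by (intros s Hs; unfold f; rewrite indic_out by (rewrite HP; exact Hs); ring).
  assert (Hin : forall s, lo <= s <= hi -> f s = F s)
    by (intros s Hs; unfold f; rewrite indic_in by (apply HP, Hs); ring).
  destruct (RInt_agree f (fun _ => 0) a lo) as [El Rl];
    [lra | apply ex_RInt_const | intros x Hx; apply Hout; lra |].
  destruct (RInt_agree f F lo hi) as [Em Rm];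
    [lra | apply ex_RInt_continuity, HF | intros x Hx; apply Hin; lra |].
  destruct (RInt_agree f (fun _ => 0) hi b) as [Er Rr];
    [lra | apply ex_RInt_const | intros x Hx; apply Hout; lra |].
  assert (Elm : ex_RInt f a hi) by (apply ex_RInt_Chasles with lo; easy).
  split; [apply ex_RInt_Chasles with hi; easy|].
  rewrite <- (RInt_Chasles (V := R_CompleteNormedModule) f a hi b),
          <- (RInt_Chasles (V := R_CompleteNormedModule) f a lo hi) by easy.
  change (RInt f a lo + RInt f lo hi + RInt f hi b = RInt F lo hi).
  rewrite Rl, Rm, Rr, !RInt_zero; ring.
Qed.

Lemma indicator_integrals_le (P : R -> Prop) (F G : R -> R) (lo hi a b : R) :
  a <= lo -> hi <= b -> (forall s, P s <-> lo <= s <= hi) -> continuity F -> continuity G ->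
  (lo <= hi -> RInt G lo hi <= RInt F lo hi) ->
  exists (prF : Riemann_integrable (fun s => indic P s * F s) a b)
         (prG : Riemann_integrable (fun s => indic P s * G s) a b),
    RiemannInt prG <= RiemannInt prF.
Proof.
  intros Ha Hb HP CF CG Hle.
  destruct (Rle_dec lo hi) as [Hlh|Hempty].
  - destruct (RInt_indicator P F lo hi a b ltac:(lra) Hb HP CF) as [EF RF].
    destruct (RInt_indicator P G lo hi a b ltac:(lra) Hb HP CG) as [EG RG].
    exists (ex_RInt_Reals_0 _ _ _ EF), (ex_RInt_Reals_0 _ _ _ EG).
    rewrite <- !RInt_Reals, RF, RG; exact (Hle Hlh).
  - assert (Hzero : forall K s, indic P s * K s = 0)
      by (intros K s; rewrite indic_out by (rewrite HP; lra); ring).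
    assert (Hex : forall K, ex_RInt (fun s => indic P s * K s) a b)
      by (intros K; apply (ex_RInt_ext (fun _ => 0)); [intros x _; symmetry; apply Hzero | apply ex_RInt_const]).
    exists (ex_RInt_Reals_0 _ _ _ (Hex F)), (ex_RInt_Reals_0 _ _ _ (Hex G)).
    rewrite <- !RInt_Reals; right; apply RInt_ext; intros x _; rewrite !Hzero; reflexivity.
Qed.

Ltac continuity_binom :=
  intros ?; repeat (apply binom_continuous || apply cont_plus || apply cont_minus
                    || apply cont_mult || apply cont_opp || apply cont_id || apply cont_const).

Lemma Rabs_le_iff (x q : R) : Rabs x <= q <-> - q <= x <= q.
Proof.
  split; [|apply Rabs_le].
  intros H; pose proof (Rle_abs x); pose proof (Rle_abs (- x)); rewrite Rabs_Ropp in *; lra.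
Qed.

(* The sets of the theorem are windows [lo,hi] symmetric about [c/2]: the
   conditions [|2s - c| <= q], [L <= s <= U], [L <= c - s <= U] are all
   invariant under [s |-> c - s]. *)
Lemma symmetric_window (c q L U : R) : exists lo hi,
  (forall s, (- q <= 2 * s - c <= q /\ L <= s <= U /\ L <= c - s <= U) <-> lo <= s <= hi)
  /\ lo + hi = c /\ L <= lo /\ hi <= U.
Proof.
  exists (Rmax (Rmax L (c - U)) ((c - q) / 2)), (Rmin (Rmin U (c - L)) ((c + q) / 2)).
  unfold Rmax, Rmin; repeat destruct Rle_dec; repeat split; intros; lra.
Qed.

Lemma setA_window (M q n : R) : exists lo hi,
  (forall s, setA M q n s <-> lo <= s <= hi) /\ lo + hi = n /\ 0 <= lo /\ hi <= M.
Proof.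
  destruct (symmetric_window n q 0 M) as (lo & hi & Hw & Hrest); exists lo, hi; split; [|exact Hrest].
  intros s; rewrite <- Hw; unfold setA; rewrite Rabs_le_iff.
  split; intros ([? ?] & [? ?] & [? ?]); repeat split; lra.
Qed.

Lemma setB_window (M q n : R) : exists lo hi,
  (forall s, setB M q n s <-> lo <= s <= hi) /\ lo + hi = n + 1 /\ 0 <= lo /\ hi <= M.
Proof.
  destruct (symmetric_window (n + 1) q 0 M) as (lo & hi & Hw & Hrest); exists lo, hi; split; [|exact Hrest].
  intros s; rewrite <- Hw; unfold setB; rewrite Rabs_le_iff.
  split; intros ([? ?] & [? ?] & [? ?]); repeat split; lra.
Qed.

Lemma setC_window (M q n : R) : exists lo hi,
  (forall s, setC M q n s <-> lo <= s <= hi) /\ lo + hi = n /\ -1 <= lo /\ hi <= M - 1.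
Proof.
  destruct (symmetric_window n q (-1) (M - 1)) as (lo & hi & Hw & Hrest); exists lo, hi; split; [|exact Hrest].
  intros s; rewrite <- Hw; unfold setC; rewrite Rabs_le_iff.
  split; intros ([? ?] & [? ?] & [? ?]); repeat split; lra.
Qed.

(* Inequality A on a window symmetric about [n/2]: by Pascal's rule the two
   integrands differ by the backward difference of
   [H s = binom (M-1) s * binom (M-2) (n-1-s)], and [H] grows under
   reflection to the right half of the window. *)
Lemma window_compare_A (M n lo hi : R) :
  1 < M -> lo <= hi -> lo + hi = n -> 0 <= lo -> hi <= M ->
  RInt (fun s => binom M s * binom (M - 2) (n - s)) lo hi
    <= RInt (fun s => binom (M - 1) s * binom (M - 1) (n - s)) lo hi.
Proof.
  intros HM Hlh Hsum Hlo Hhi.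
  apply (RInt_telescope_le _ _ (fun s => binom (M - 1) s * binom (M - 2) (n - 1 - s)));
    [exact Hlh | continuity_binom .. | |].
  - intros s; rewrite (binom_pascal M (M - 1) s), (binom_pascal (M - 1) (M - 2) (n - s)) by lra.
    replace (n - s - 1) with (n - 1 - s) by ring; replace (n - 1 - (s - 1)) with (n - s) by ring.
    ring.
  - intros s Hs Hc; replace (lo + hi - 1 - s) with (n - 1 - s) by lra.
    replace (n - 1 - (n - 1 - s)) with s by ring.
    apply binom_cross_swap; lra.
Qed.

(* Inequality B on a window symmetric about [(n+1)/2]: the same difference
   with the opposite sign, now controlled by [binom_cross_shift]. *)
Lemma window_compare_B (M n lo hi : R) :
  1 < M -> lo <= hi -> lo + hi = n + 1 -> 0 <= lo -> hi <= M ->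
  RInt (fun s => binom (M - 1) s * binom (M - 1) (n - s)) lo hi
    <= RInt (fun s => binom M s * binom (M - 2) (n - s)) lo hi.
Proof.
  intros HM Hlh Hsum Hlo Hhi.
  apply (RInt_telescope_le _ _ (fun s => - (binom (M - 1) s * binom (M - 2) (n - 1 - s))));
    [exact Hlh | continuity_binom .. | |].
  - intros s; rewrite (binom_pascal M (M - 1) s), (binom_pascal (M - 1) (M - 2) (n - s)) by lra.
    replace (n - s - 1) with (n - 1 - s) by ring; replace (n - 1 - (s - 1)) with (n - s) by ring.
    ring.
  - intros s Hs Hc; replace (lo + hi - 1 - s) with (n - s) by lra.
    replace (n - 1 - (n - s)) with (s - 1) by ring.
    pose proof (binom_cross_shift (M - 1) (M - 2) (n - s) (s - 1)) as Hshift.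
    replace (s - 1 + 1) with s in Hshift by ring; replace (n - s - 1) with (n - 1 - s) in Hshift by ring.
    apply Ropp_le_contravar, Hshift; lra.
Qed.

(* Inequality C on a window symmetric about [n/2]: here the integrands
   differ by the forward difference of [binom (M-1) s * binom (M-2) (n-s)]. *)
Lemma window_compare_C (M n lo hi : R) :
  1 < M -> lo <= hi -> lo + hi = n -> -1 <= lo -> hi <= M - 1 ->
  RInt (fun s => binom M (s + 1) * binom (M - 2) (n - s - 1)) lo hi
    <= RInt (fun s => binom (M - 1) s * binom (M - 1) (n - s)) lo hi.
Proof.
  intros HM Hlh Hsum Hlo Hhi.
  apply (RInt_telescope_le _ _ (fun s => - (binom (M - 1) (s + 1) * binom (M - 2) (n - s - 1))));
    [exact Hlh | continuity_binom .. | |].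
  - intros s; rewrite (binom_pascal M (M - 1) (s + 1)), (binom_pascal (M - 1) (M - 2) (n - s)) by lra.
    replace (s + 1 - 1) with s by ring; replace (s - 1 + 1) with s by ring.
    replace (n - (s - 1) - 1) with (n - s) by ring.
    ring.
  - intros s Hs Hc; replace (lo + hi - 1 - s) with (n - 1 - s) by lra.
    replace (n - 1 - s + 1) with (n - s) by ring; replace (n - (n - 1 - s) - 1) with s by ring.
    apply Ropp_le_contravar, binom_cross_shift; lra.
Qed.

Lemma integrals_A (M q n : R) : 1 < M ->
  exists (pr1 : Riemann_integrable
             (fun s => indic (setA M q n) s * (binom (M - 1) s * binom (M - 1) (n - s))) (-1) (M + 1))
         (pr2 : Riemann_integrable
             (fun s => indic (setA M q n) s * (binom M s * binom (M - 2) (n - s))) (-1) (M + 1)),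
    RiemannInt pr1 >= RiemannInt pr2.
Proof.
  intros HM; destruct (setA_window M q n) as (lo & hi & Hset & Hsum & Hlo & Hhi).
  destruct (indicator_integrals_le (setA M q n) (fun s => binom (M - 1) s * binom (M - 1) (n - s))
              (fun s => binom M s * binom (M - 2) (n - s)) lo hi (-1) (M + 1))
    as (pr1 & pr2 & Hle); [lra | lra | exact Hset | continuity_binom .. | |].
  - intros Hlh; apply window_compare_A; assumption.
  - exists pr1, pr2; lra.
Qed.

Lemma integrals_B (M q n : R) : 1 < M ->
  exists (pr1 : Riemann_integrable
             (fun s => indic (setB M q n) s * (binom (M - 1) s * binom (M - 1) (n - s))) (-1) (M + 1))
         (pr2 : Riemann_integrable
             (fun s => indic (setB M q n) s * (binom M s * binom (M - 2) (n - s))) (-1) (M + 1)),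
    RiemannInt pr1 <= RiemannInt pr2.
Proof.
  intros HM; destruct (setB_window M q n) as (lo & hi & Hset & Hsum & Hlo & Hhi).
  destruct (indicator_integrals_le (setB M q n) (fun s => binom M s * binom (M - 2) (n - s))
              (fun s => binom (M - 1) s * binom (M - 1) (n - s)) lo hi (-1) (M + 1))
    as (pr2 & pr1 & Hle); [lra | lra | exact Hset | continuity_binom .. | |].
  - intros Hlh; apply window_compare_B; assumption.
  - exists pr1, pr2; exact Hle.
Qed.

Lemma integrals_C (M q n : R) : 1 < M ->
  exists (pr1 : Riemann_integrable
             (fun s => indic (setC M q n) s * (binom (M - 1) s * binom (M - 1) (n - s))) (-1) (M + 1))
         (pr2 : Riemann_integrable
             (fun s => indic (setC M q n) s * (binom M (s + 1) * binom (M - 2) (n - s - 1))) (-1) (M + 1)),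
    RiemannInt pr1 >= RiemannInt pr2.
Proof.
  intros HM; destruct (setC_window M q n) as (lo & hi & Hset & Hsum & Hlo & Hhi).
  destruct (indicator_integrals_le (setC M q n) (fun s => binom (M - 1) s * binom (M - 1) (n - s))
              (fun s => binom M (s + 1) * binom (M - 2) (n - s - 1)) lo hi (-1) (M + 1))
    as (pr1 & pr2 & Hle); [lra | lra | exact Hset | continuity_binom .. | |].
  - intros Hlh; apply window_compare_C; assumption.
  - exists pr1, pr2; lra.
Qed.

Theorem lemma2 (M q n : R) (hM : 1 < M) (hq : 0 < q) (hn : -2 < n) :
  (exists (pr1 : Riemann_integrable
             (fun s => indic (setA M q n) s * (binom (M - 1) s * binom (M - 1) (n - s))) (-1) (M + 1))
          (pr2 : Riemann_integrable
             (fun s => indic (setA M q n) s * (binom M s * binom (M - 2) (n - s))) (-1) (M + 1)),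
      RiemannInt pr1 >= RiemannInt pr2) /\
  (exists (pr1 : Riemann_integrable
             (fun s => indic (setB M q n) s * (binom (M - 1) s * binom (M - 1) (n - s))) (-1) (M + 1))
          (pr2 : Riemann_integrable
             (fun s => indic (setB M q n) s * (binom M s * binom (M - 2) (n - s))) (-1) (M + 1)),
      RiemannInt pr1 <= RiemannInt pr2) /\
  (exists (pr1 : Riemann_integrable
             (fun s => indic (setC M q n) s * (binom (M - 1) s * binom (M - 1) (n - s))) (-1) (M + 1))
          (pr2 : Riemann_integrable
             (fun s => indic (setC M q n) s * (binom M (s + 1) * binom (M - 2) (n - s - 1))) (-1) (M + 1)),
      RiemannInt pr1 >= RiemannInt pr2).
Proof.
  split; [|split]; [apply integrals_A | apply integrals_B | apply integrals_C]; exact hM.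
Qed.
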